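(* Let $G=(V,E)$ be a finite simple regular graph with $p=|V|$ vertices and $q=|E|$ edges. If $x$ is any easy construction sequence for $G$, then $\nu(x)=\nu^*(G)=q(p+q)$.
   Context: For a finite simple graph $G=(V,E)$ with $p=|V|$, $q=|E|$, put $\ell=p+q$. A construction sequence (c-sequence) for $G$ is a bijection $x:\{1,\dots,\ell\}\to V\sqcup E$ such that for every edge $e=uw$, $x^{-1}(e)>\max\{x^{-1}(u),x^{-1}(w)\}$. The cost of an edge $e=uw$ in $x$ is $\nu(e,x)=(x^{-1}(e)-x^{-1}(u))+(x^{-1}(e)-x^{-1}(w))$, and the cost of $x$ is $\nu(x)=\sum_{e\in E}\nu(e,x)$. $\nu^*(G)$ denotes the maximum of $\nu(x)$ over all c-sequences $x$ for $G$. A c-sequence is easy if no edge precedes a vertex (all vertices are listed first, then all edges). *)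

From mathcomp Require Import all_boot.
Set Implicit Arguments. Unset Strict Implicit. Unset Printing Implicit Defensive.

(* A finite simple graph: vertex type T (finType), adjacency e : rel T,
   assumed symmetric and irreflexive (hypotheses of the theorem). *)
Section Graph.
Variables (T : finType) (e : rel T).

Definition is_edge (A : {set T}) : bool :=
  [exists u, exists w, e u w && (A == [set u; w])].

Definition edge_t : finType := {A : {set T} | is_edge A}.

Definition VE : finType := (T + edge_t)%type.

Definition nverts : nat := #|T|.
Definition nedges : nat := #|edge_t|.
Definition ell : nat := nverts + nedges.

(* A construction sequence x : {1..ell} -> V ⊔ E is represented by its
   inverse x^{-1} : V ⊔ E -> 'I_ell (0-based positions; the cost only uses
   differences of positions, so the 0/1-based shift is irrelevant). *)
Definition pos (s : VE -> 'I_ell) (a : VE) : nat := nat_of_ord (s a).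

Definition cseq_cond (s : VE -> 'I_ell) : bool :=
  [forall E : edge_t, forall u : T,
     (u \in val E) ==> (pos s (inl u) < pos s (inr E))].

Definition easy (s : VE -> 'I_ell) : bool :=
  [forall E : edge_t, forall u : T, pos s (inl u) < pos s (inr E)].

Definition edge_cost (s : VE -> 'I_ell) (E : edge_t) : nat :=
  \sum_(u in val E) (pos s (inr E) - pos s (inl u)).

Definition cost (s : VE -> 'I_ell) : nat := \sum_(E : edge_t) edge_cost s E.

(* nu^*(G): maximum cost over all c-sequences (bijections V ⊔ E -> 'I_ell;
   since #|V ⊔ E| = ell, injectivity is equivalent to bijectivity). *)
Definition nu_star : nat :=
  \max_(s : {ffun VE -> 'I_ell} | injectiveb s && cseq_cond s) cost s.

End Graph.

Definition regular (T : finType) (e : rel T) : Prop :=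
  exists k : nat, forall v : T, #|[set w | e v w]| = k.

From mathcomp Require Import all_boot.
From mathcomp Require Import zify.
Set Implicit Arguments. Unset Strict Implicit. Unset Printing Implicit Defensive.

(* Write S_V and S_E for the sums of the positions of the vertices and of the
   edges.  An edge uw costs 2 pos(uw) - pos(u) - pos(w), so in a k-regular graph
   cost = 2 S_E - k S_V, while S_V + S_E = C(l, 2) because the positions are
   0, ..., l - 1.  With the handshake identity k p = 2 q this becomes
   cost + (k + 2) S_V = (k + 2) C(p, 2) + q l.  The p vertex positions are
   distinct, so S_V >= C(p, 2) and every c-sequence costs at most q l.  In an
   easy sequence the q edge positions are distinct and at least p, which forces
   S_V = C(p, 2) and hence cost = q l. *)

Lemma bin2D m n : 'C(m + n, 2) = 'C(m, 2) + m * n + 'C(n, 2).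
Proof.
rewrite -Vandermonde !big_ord_recr big_ord0 /= !bin0 !bin1 muln1 mul1n subn0; lia.
Qed.

Lemma handshake_bin2 k p q :
  k * p = 2 * q -> k.+2 * 'C(p, 2) + q * (p + q) = 2 * 'C(p + q, 2).
Proof.
move=> kp_2q; have two_bin2 n : 2 * 'C(n, 2) = n * n.-1 by rewrite -mul_bin_diag bin1.
apply/eqP; rewrite -(eqn_pmul2l (isT : 0 < 2)) mulnDr mulnCA !two_bin2; apply/eqP.
case: p kp_2q => [|p] kp_2q; rewrite ?addSn /=; nia.
Qed.

Lemma leq_sumn_sorted (s : seq nat) a : sorted ltn s -> all (leq a) s ->
  a * size s + 'C(size s, 2) <= sumn s.
Proof.
elim: s a => [|x s IHs] a; first by rewrite muln0.
move=> /= s_path /andP[a_le_x s_ge_a].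
have s_gt_x : all (leq x.+1) s := order_path_min ltn_trans s_path.
have := IHs x.+1 (path_sorted s_path) s_gt_x.
rewrite binS bin1; nia.
Qed.

Lemma leq_sum_inj (A : finType) (f : A -> nat) a :
  injective f -> (forall x, a <= f x) -> a * #|A| + 'C(#|A|, 2) <= \sum_x f x.
Proof.
move=> f_inj f_ge_a; set s := [seq f x | x <- enum A].
have -> : \sum_x f x = sumn s by rewrite sumnE big_map big_enum.
have -> : #|A| = size s by rewrite size_map cardE.
have s_sort : perm_eq (sort leq s) s by rewrite perm_sort.
rewrite -(perm_size s_sort) -(perm_sumn s_sort); apply: leq_sumn_sorted.
  rewrite ltn_sorted_uniq_leq sort_uniq map_inj_uniq ?enum_uniq //.
  exact/sort_sorted/leq_total.
by rewrite all_sort; apply/allP => _ /mapP[x _ ->].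
Qed.

Lemma set2_inj (T : finType) (u : T) : injective (fun w => [set u; w]).
Proof.
move=> w1 w2 eq_set; have : w1 \in [set u; w2] by rewrite -eq_set set22.
rewrite !inE => /orP[/eqP w1u | /eqP //]; subst w1.
have : w2 \in [set u; u] by rewrite eq_set set22.
by rewrite setUid inE => /eqP.
Qed.

Section Graph.
Variables (T : finType) (e : rel T).

Lemma edgeP (E : edge_t e) : exists u w, e u w /\ val E = [set u; w].
Proof.
by case: E => A /= /existsP[u /existsP[w /andP[e_uw /eqP ->]]]; exists u, w.
Qed.

Definition edges_at (u : T) : {set edge_t e} := [set E : edge_t e | u \in val E].

Lemma sum_edge_ends (f : T -> nat) :
  \sum_(E : edge_t e) \sum_(u in val E) f u = \sum_u #|edges_at u| * f u.
Proof.
under eq_bigr do rewrite big_mkcond.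
rewrite exchange_big; apply: eq_bigr => u _.
by rewrite -big_mkcond sum_nat_const /edges_at cardsE.
Qed.

Definition vpos_sum (s : VE e -> 'I_(ell e)) : nat := \sum_u pos s (inl u).
Definition epos_sum (s : VE e -> 'I_(ell e)) : nat := \sum_E pos s (inr E).

Section Positions.
Variables (s : VE e -> 'I_(ell e)) (s_inj : injective s).

Lemma pos_inj : injective (pos s).
Proof. by move=> a b /val_inj/s_inj. Qed.

Lemma vpos_sum_add_epos_sum : vpos_sum s + epos_sum s = 'C(ell e, 2).
Proof.
have s_bij : bijective s by apply: inj_card_bij; rewrite // card_ord card_sum.
by rewrite -bin2_sum big_mkord (reindex s (onW_bij _ s_bij)) big_sumType.
Qed.

Lemma bin2_leq_vpos_sum : 'C(nverts T, 2) <= vpos_sum s.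
Proof. by have := leq_sum_inj (inj_comp pos_inj inl_inj) (fun _ => leq0n _). Qed.

Lemma easy_leq_epos_sum :
  easy s -> nverts T * nedges e + 'C(nedges e, 2) <= epos_sum s.
Proof.
move=> /forallP s_easy; apply: leq_sum_inj (inj_comp pos_inj inr_inj) _ => E.
have : size [seq pos s (inl u) | u <- enum T] <= size (iota 0 (pos s (inr E))).
  apply: uniq_leq_size => [|_ /mapP[u _ ->]].
    by rewrite (map_inj_uniq (inj_comp pos_inj inl_inj)) enum_uniq.
  by move/forallP: (s_easy E) => /(_ u); rewrite mem_iota.
by rewrite size_map size_iota -cardE.
Qed.

Lemma easy_vpos_sum : easy s -> vpos_sum s = 'C(nverts T, 2).
Proof.
move=> s_easy; have := easy_leq_epos_sum s_easy.
have := bin2_leq_vpos_sum; have := vpos_sum_add_epos_sum.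
rewrite /ell bin2D; lia.
Qed.

End Positions.

Hypotheses (e_sym : symmetric e) (e_irr : irreflexive e).

Lemma card_edge (E : edge_t e) : #|val E| = 2.
Proof.
have [u [w [e_uw ->]]] := edgeP E.
by rewrite cards2; case: eqVneq e_uw => [-> | //]; rewrite e_irr.
Qed.

Lemma card_edges_at u : #|edges_at u| = #|[set w | e u w]|.
Proof.
rewrite -(card_imset _ val_inj) -(card_imset _ (@set2_inj _ u)).
apply: eq_card => A; apply/imsetP/imsetP.
- case=> E; rewrite inE => u_in_E ->; have [a [b [e_ab E_ab]]] := edgeP E.
  move: u_in_E; rewrite E_ab => /set2P[] ->; first by exists b; rewrite ?inE.
  by exists a; rewrite ?inE 1?e_sym // setUC.
- case=> w; rewrite inE => e_uw ->.
  have edge_uw : is_edge e [set u; w].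
    by apply/existsP; exists u; apply/existsP; exists w; rewrite e_uw eqxx.
  by exists (Sub [set u; w] edge_uw); rewrite // inE SubK set21.
Qed.

Section Regular.
Variable k : nat.
Hypothesis e_reg : forall u : T, #|[set w | e u w]| = k.

Lemma sum_edge_ends_regular (f : T -> nat) :
  \sum_(E : edge_t e) \sum_(u in val E) f u = k * \sum_u f u.
Proof.
rewrite sum_edge_ends big_distrr; apply: eq_bigr => u _.
by rewrite card_edges_at e_reg.
Qed.

Lemma regular_handshake : k * nverts T = 2 * nedges e.
Proof.
rewrite /nverts /nedges -!sum1_card -sum_edge_ends_regular big_distrr.
by apply: eq_bigr => E _; rewrite sum1_card card_edge.
Qed.

Lemma cost_add_vpos_sum (s : VE e -> 'I_(ell e)) :
  cseq_cond s -> cost s + k * vpos_sum s = 2 * epos_sum s.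
Proof.
move=> /forallP s_cseq; rewrite -sum_edge_ends_regular -big_split big_distrr.
apply: eq_bigr => E _.
rewrite /edge_cost -big_split /= -(card_edge E) -sum_nat_const.
apply: eq_bigr => u u_in_E; rewrite subnK //; apply: ltnW.
by move/forallP: (s_cseq E) => /(_ u)/implyP; apply.
Qed.

Lemma cost_balance (s : VE e -> 'I_(ell e)) : injective s -> cseq_cond s ->
  cost s + k.+2 * vpos_sum s = k.+2 * 'C(nverts T, 2) + nedges e * ell e.
Proof.
move=> s_inj s_cseq; rewrite /ell handshake_bin2 ?regular_handshake //.
have := cost_add_vpos_sum s_cseq; have := vpos_sum_add_epos_sum s_inj.
rewrite /ell; nia.
Qed.

Lemma cost_le (s : VE e -> 'I_(ell e)) :
  injective s -> cseq_cond s -> cost s <= nedges e * ell e.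
Proof.
move=> s_inj s_cseq; have := cost_balance s_inj s_cseq.
have : k.+2 * 'C(nverts T, 2) <= k.+2 * vpos_sum s.
  by rewrite leq_mul2l bin2_leq_vpos_sum.
lia.
Qed.

Lemma cost_easy (s : VE e -> 'I_(ell e)) :
  injective s -> cseq_cond s -> easy s -> cost s = nedges e * ell e.
Proof.
move=> s_inj s_cseq s_easy; have := cost_balance s_inj s_cseq.
by rewrite easy_vpos_sum // addnC => /addnI.
Qed.

Lemma nu_star_le : nu_star e <= nedges e * ell e.
Proof. by apply/bigmax_leqP => s /andP[/injectiveP s_inj]; apply: cost_le. Qed.

End Regular.

Lemma leq_cost_nu_star (s : VE e -> 'I_(ell e)) :
  injective s -> cseq_cond s -> cost s <= nu_star e.
Proof.
move=> s_inj s_cseq; set f := [ffun a => s a].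
have posE a : pos f a = pos s a by rewrite /pos ffunE.
have -> : cost s = cost f.
  by apply: eq_bigr => E _; apply: eq_bigr => u _; rewrite !posE.
apply: leq_bigmax_cond; apply/andP; split.
  by apply/injectiveP => a b; rewrite !ffunE => /s_inj.
apply/forallP => E; apply/forallP => u; rewrite !posE.
by move/forallP: s_cseq => /(_ E)/forallP/(_ u).
Qed.

End Graph.

Theorem theorem1 (T : finType) (e : rel T)
  (e_sym : symmetric e) (e_irr : irreflexive e) (e_reg : regular e)
  (x : VE e -> 'I_(ell e)) (x_bij : bijective x)
  (x_cseq : cseq_cond x) (x_easy : easy x) :
  cost x = nu_star e /\ nu_star e = nedges e * (nverts T + nedges e).
Proof.
have [k e_kreg] := e_reg; have x_inj := bij_inj x_bij.
have cost_x := cost_easy e_sym e_irr e_kreg x_inj x_cseq x_easy.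
have nu_star_x : nu_star e = cost x.
  apply/eqP; rewrite eqn_leq leq_cost_nu_star // andbT cost_x.
  exact: (nu_star_le e_sym e_irr e_kreg).
by rewrite nu_star_x cost_x.
Qed.
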